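(* Let $\mathscr{C}$ be an apex-minor-free class of graphs. There exists a constant $\nu_{\mathscr{C}}>0$ depending only on $\mathscr{C}$ such that for every $G\in\mathscr{C}$ and every nonempty $X\subseteq V(G)$, $$\left|\{N(C)\colon C\in \mathrm{cc}(G\setminus X)\}\right|\le \nu_{\mathscr{C}}\cdot |X|.$$
   Context: A class $\mathscr{C}$ is apex-minor-free if it is minor-closed and excludes some fixed apex graph (a graph that becomes planar after deleting one vertex) as a minor. $\mathrm{cc}(G\setminus X)$ denotes the set of (vertex sets of) connected components of the graph $G\setminus X$ obtained by deleting $X$, and for a vertex set $C$, $N(C)$ denotes the set of vertices outside $C$ adjacent to some vertex of $C$. *)

From HB Require Import structures.
From mathcomp Require Import all_boot all_order all_algebra.
From mathcomp Require Import all_classical all_reals all_analysis.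
From mathcomp Require Import Rstruct Rstruct_topology.

Set Implicit Arguments.
Unset Strict Implicit.
Unset Printing Implicit Defensive.

Import Order.TTheory GRing.Theory Num.Theory.
Local Open Scope ring_scope.

Record sgraph := SGraph {
  vt : finType;
  adj : rel vt;
  adj_sym : symmetric adj;
  adj_irrefl : irreflexive adj
}.

Section GraphDefs.
Variable G : sgraph.
Notation V := (vt G).

Definition adj_in (S : {set V}) : rel V :=
  fun u v => [&& u \in S, v \in S & adj u v].

Definition connected_set (S : {set V}) : bool :=
  [forall u in S, forall v in S, connect (adj_in S) u v].

(* C is (the vertex set of) a connected component of G \ X *)
Definition is_comp (X C : {set V}) : bool :=
  [&& C != finset.set0, C \subset ~: X, connected_set C &
      [forall u in C, forall v, (v \notin X) ==> adj u v ==> (v \in C)]].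

Definition cc (X : {set V}) : {set {set V}} := [set C | is_comp X C].

Definition nbhd (C : {set V}) : {set V} :=
  [set v | (v \notin C) && [exists u in C, adj u v]].

Definition nbhds_of_comps (X : {set V}) : {set {set V}} :=
  [set nbhd C | C in cc X].

(* Planarity of the induced subgraph G[S], defined topologically: an
   injective placement of the vertices of S in R^2 together with, for every
   edge uv of G[S], a simple arc (continuous injective image of [0,1]) from
   pos u to pos v whose interior avoids all vertex points, and such that the
   interiors of arcs of distinct edges are disjoint.  (An arc is given for
   each ordered pair; arcs for (u,v) and (v,u) are not constrained against
   each other, which is harmless: one of them may be discarded.) *)
Definition unit_int : set Rdefinitions.R := (fun t => 0 <= t <= 1).
Definition open_unit_int : set Rdefinitions.R := (fun t => 0 < t < 1).

Definition planar_on (S : {set V}) : Prop :=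
  exists (pos : V -> Rdefinitions.R * Rdefinitions.R)
         (arc : V -> V -> Rdefinitions.R -> Rdefinitions.R * Rdefinitions.R),
    {in S &, injective pos} /\
    (forall u v, adj_in S u v ->
       [/\ continuous (from_subspace unit_int (arc u v)),
           set_inj unit_int (arc u v),
           arc u v 0 = pos u, arc u v 1 = pos v &
           forall t w, open_unit_int t -> w \in S -> arc u v t <> pos w]) /\
    (forall u v u' v', adj_in S u v -> adj_in S u' v' ->
       ~ ((u = u' /\ v = v') \/ (u = v' /\ v = u')) ->
       forall t t', open_unit_int t -> open_unit_int t' ->
         arc u v t <> arc u' v' t').

Definition planar : Prop := planar_on [set: V]%SET.

Definition apex : Prop := exists a : V, planar_on [set~ a].

End GraphDefs.

Definition minor (H G : sgraph) : Prop :=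
  exists phi : vt H -> {set vt G},
    [/\ forall x, phi x != finset.set0,
        forall x, connected_set (phi x),
        forall x y, x != y -> [disjoint phi x & phi y] &
        forall x y, adj x y ->
          exists u v, [/\ u \in phi x, v \in phi y & adj u v]].

Definition minor_closed (C : sgraph -> Prop) : Prop :=
  forall G H, C G -> minor H G -> C H.

Definition apex_minor_free (C : sgraph -> Prop) : Prop :=
  minor_closed C /\
  exists H : sgraph, apex H /\ forall G, C G -> ~ minor H G.

From mathcomp Require Import all_boot zify.

Set Implicit Arguments.
Unset Strict Implicit.
Unset Printing Implicit Defensive.

(* By Mader's argument, a family of disjoint connected branch sets in G whose
   touching graph has average degree at least 2^h yields a K_h minor, so every
   such minor of G has average degree less than c = 2^|H|.
   Among components of G - X with pairwise distinct neighbourhoods, choose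
   greedily for as many components as possible a pair of neighbours in X not
   chosen before.  Merging each matched component into the first vertex of its
   pair gives a minor on X containing every chosen pair as an edge, so fewer
   than c |X| components are matched.  The neighbourhood of an unmatched
   component is a clique of the graph of chosen pairs, which is c-degenerate
   and therefore has at most 2^c |X| + 1 cliques. *)

Section Connectivity.
Variable G : sgraph.
Implicit Types (A B S T X C : {set vt G}) (u v : vt G).

Definition touch A B : bool := [exists u in A, [exists w in B, adj u w]].

Lemma touchC A B : touch A B = touch B A.
Proof.
apply/idP/idP => /exists_inP [u uA /exists_inP [w wB uw]];
  by apply/exists_inP; exists w => //; apply/exists_inP; exists u; rewrite // adj_sym.
Qed.

Lemma touchS A A' B B' : A \subset A' -> B \subset B' -> touch A B -> touch A' B'.
Proof.
move=> /subsetP sA /subsetP sB /exists_inP [u uA /exists_inP [w wB uw]].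
by apply/exists_inP; exists u; rewrite ?sA //; apply/exists_inP; exists w; rewrite ?sB.
Qed.

Lemma adj_in_sym S : symmetric (adj_in S).
Proof. by move=> x y; rewrite /adj_in adj_sym andbCA. Qed.

Lemma connect_adj_inS S T u v :
  S \subset T -> connect (adj_in S) u v -> connect (adj_in T) u v.
Proof.
move=> /subsetP sST; apply: connect_sub => x y /and3P [xS yS xy].
by apply: connect1; rewrite /adj_in !sST.
Qed.

Lemma connected_set_connect S u v :
  connected_set S -> u \in S -> v \in S -> connect (adj_in S) u v.
Proof. by move=> /forall_inP cS uS; apply/forall_inP/cS. Qed.

Lemma connected_set_star S r :
  (forall u, u \in S -> connect (adj_in S) r u) -> connected_set S.
Proof.
move=> rS; apply/forall_inP => u uS; apply/forall_inP => v vS.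
by apply: connect_trans (rS _ vS); rewrite (sym_connect_sym (@adj_in_sym S)) rS.
Qed.

Lemma connected_setU A B :
  connected_set A -> connected_set B -> touch A B -> connected_set (A :|: B).
Proof.
move=> cA cB /exists_inP [a aA /exists_inP [b bB ab]].
apply: (@connected_set_star _ a) => u /setUP [uA|uB].
  by apply: (connect_adj_inS (subsetUl A B)); apply: connected_set_connect.
apply: (@connect_trans _ _ b); first by apply: connect1; rewrite /adj_in !inE aA bB ab orbT.
by apply: (connect_adj_inS (subsetUr A B)); apply: connected_set_connect.
Qed.

Lemma cc_sub_compl X C : C \in cc X -> C \subset ~: X.
Proof. by rewrite inE => /and4P []. Qed.

Lemma cc_connected X C : C \in cc X -> connected_set C.
Proof. by rewrite inE => /and4P []. Qed.

Lemma cc_closed X C u v : C \in cc X -> u \in C -> v \notin X -> adj u v -> v \in C.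
Proof.
rewrite inE => /and4P [_ _ _ /forall_inP clC] /clC /forallP /(_ v).
by move=> /implyP H /H /implyP.
Qed.

Lemma cc_sub X C C' u :
  C \in cc X -> C' \in cc X -> u \in C -> u \in C' -> C \subset C'.
Proof.
move=> CX C'X uC uC'; apply/subsetP => w wC.
have notX x : x \in C -> x \notin X by move/(subsetP (cc_sub_compl CX)); rewrite inE.
have clC' : closed (adj_in C) (mem C').
  move=> x y /and3P [xC yC xy]; apply/idP/idP => [xC'|yC'].
    exact: cc_closed C'X xC' (notX _ yC) xy.
  by apply: cc_closed C'X yC' (notX _ xC) _; rewrite adj_sym.
by rewrite -(closed_connect clC' (connected_set_connect (cc_connected CX) uC wC)).
Qed.

Lemma cc_disjoint X C C' :
  C \in cc X -> C' \in cc X -> C != C' -> [disjoint C & C'].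
Proof.
move=> CX C'X; apply: contraR => /pred0Pn [u /andP [uC uC']].
by rewrite eqEsubset (cc_sub CX C'X uC uC') (cc_sub C'X CX uC' uC).
Qed.

Lemma nbhd_cc_sub X C : C \in cc X -> nbhd C \subset X.
Proof.
move=> CX; apply/subsetP => v; rewrite inE => /andP [vC /exists_inP [u uC uv]].
by apply: contraR vC => vX; apply: cc_closed CX uC vX uv.
Qed.

End Connectivity.

Section BranchSets.
Variable G : sgraph.
Implicit Types (B : {set {set vt G}}) (b v w x : {set vt G}).

Definition branch_sets B : Prop :=
  (forall b, b \in B -> b != set0 /\ connected_set b) /\
  {in B &, forall b1 b2, b1 != b2 -> [disjoint b1 & b2]}.

Definition badj b b' := (b != b') && touch b b'.
Definition deg B b := \sum_(b' in B) badj b b'.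
Definition deg_sum B := \sum_(b in B) deg B b.
Definition codeg B v w := \sum_(x in B) badj v x * badj w x.

Definition sparse_minors (c : nat) : Prop :=
  forall B, branch_sets B -> B != set0 -> deg_sum B < c * #|B|.

Definition clique_model B h (Q : nat -> {set vt G}) : Prop :=
  (forall i, i < h -> [/\ connected_set (Q i), Q i \subset cover B &
                        exists2 b, b \in B & b \subset Q i]) /\
  (forall i j, i < h -> j < h -> i != j -> [disjoint Q i & Q j] /\ touch (Q i) (Q j)).

Lemma badjC b b' : badj b b' = badj b' b.
Proof. by rewrite /badj touchC eq_sym. Qed.

Lemma badjxx b : badj b b = false.
Proof. by rewrite /badj eqxx. Qed.

Lemma deg_setD1 B v : v \in B -> deg B v = deg (B :\ v) v.
Proof. by move=> vB; rewrite /deg (big_setD1 v vB) /= badjxx. Qed.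

Lemma deg_sumU1 B x :
  x \notin B -> deg_sum (x |: B) = deg_sum B + 2 * deg B x.
Proof.
move=> xB; rewrite /deg_sum big_setU1 //=.
have -> : deg (x |: B) x = deg B x by rewrite /deg big_setU1 //= badjxx.
rewrite (eq_bigr (fun b => badj x b + deg B b)) => [|b _]; last first.
  by rewrite /deg big_setU1 //= badjC.
by rewrite big_split /= -/(deg B x); lia.
Qed.

Lemma deg_sumD1 B v : v \in B -> deg_sum B = deg_sum (B :\ v) + 2 * deg B v.
Proof.
by move=> vB; rewrite -{1}(setD1K vB) deg_sumU1 ?setD11 // (deg_setD1 vB).
Qed.

Lemma branch_setsS B B' : B' \subset B -> branch_sets B -> branch_sets B'.
Proof. by move=> /subsetP sB [nB dB]; split=> [b /sB|b1 b2 /sB b1B /sB]; auto. Qed.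

Lemma clique_model_refine B B' h Q :
  cover B' \subset cover B -> (forall b, b \in B' -> exists2 b0, b0 \in B & b0 \subset b) ->
  clique_model B' h Q -> clique_model B h Q.
Proof.
move=> sc sb [QB' QQ]; split=> // i ih; have [cQ sQ [b bB' bQ]] := QB' i ih.
split=> //; first exact: subset_trans sc.
by have [b0 b0B sb0] := sb b bB'; exists b0 => //; apply: subset_trans bQ.
Qed.

Definition contract B v w := (v :|: w) |: (B :\: [set v; w]).

Section Contraction.
Variables (B : {set {set vt G}}) (v w : {set vt G}).
Hypotheses (mB : branch_sets B) (vB : v \in B) (wB : w \in B) (vw : badj v w).

Let nvw : v != w. Proof. by case/andP: vw. Qed.
Let rest := B :\: [set v; w].
Let restB : rest \subset B. Proof. exact: subsetDl. Qed.
Let restP x : x \in rest -> [/\ x \in B, x != v & x != w].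
Proof. by rewrite !inE negb_or => /andP [/andP [-> ->] ->]. Qed.
Let eB : B = v |: (w |: rest).
Proof.
apply/setP => x; rewrite !inE; case: (eqVneq x v) => [->|_]; first by rewrite vB.
by case: (eqVneq x w) => [->|].
Qed.

Lemma setU_notin_branch_sets : v :|: w \notin B.
Proof.
have [/set0Pn [a av] _] := mB.1 v vB; have [/set0Pn [b bw] _] := mB.1 w wB.
apply/negP => uB.
have uv : v :|: w = v.
  case: (eqVneq (v :|: w) v) => // /(mB.2 _ _ uB vB) dj.
  by have := @disjointFr _ _ _ a dj; rewrite inE av => /(_ isT).
have := @disjointFr _ _ _ b (mB.2 _ _ vB wB nvw).
by rewrite -{1}uv inE bw orbT => /(_ isT).
Qed.

Let wR : w \notin rest. Proof. by rewrite !inE eqxx orbT. Qed.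
Let vwR : v \notin w |: rest. Proof. by rewrite !inE eqxx (negbTE nvw). Qed.
Let uR : v :|: w \notin rest.
Proof. by apply: contraNN setU_notin_branch_sets; apply: (subsetP restB). Qed.

Lemma card_contract : #|contract B v w|.+1 = #|B|.
Proof. by rewrite /contract cardsU1 uR [in RHS]eB cardsU1 vwR cardsU1 wR. Qed.

Lemma branch_sets_contract : branch_sets (contract B v w).
Proof.
have [[nv cv] [_ cw]] := (mB.1 v vB, mB.1 w wB).
have disj_u x : x \in rest -> [disjoint v :|: w & x].
  case/restP=> xB xv xw.
  by rewrite -setI_eq0 setIUl setU_eq0 !setI_eq0 !mB.2 // eq_sym.
split=> [b|b1 b2].
  case/setU1P=> [->|/(subsetP restB) bB]; last exact: mB.1.
  split; last exact: connected_setU (andP vw).2.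
  by apply: contraNneq nv; rewrite -subset0 => <-; apply: subsetUl.
move=> /setU1P [->|b1R] /setU1P [->|b2R]; rewrite ?eqxx // => nb.
- exact: disj_u.
- by rewrite disjoint_sym; apply: disj_u.
- exact: mB.2 (subsetP restB _ b1R) (subsetP restB _ b2R) nb.
Qed.

Lemma clique_model_contract h Q : clique_model (contract B v w) h Q -> clique_model B h Q.
Proof.
apply: clique_model_refine.
  apply/bigcupsP => b /setU1P [->|/(subsetP restB) bB]; last exact: bigcup_sup.
  by rewrite subUset !bigcup_sup.
move=> b /setU1P [->|/(subsetP restB) bB]; last by exists b.
by exists v => //; apply: subsetUl.
Qed.

(* merging v and w turns each common neighbour into one neighbour and loses the edge vw *)
Lemma deg_sum_contract : deg_sum B <= deg_sum (contract B v w) + 2 + 2 * codeg B v w.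
Proof.
have merge x : x \in rest ->
    badj v x + badj w x <= badj (v :|: w) x + badj v x * badj w x.
  move=> xR; have ux : v :|: w != x by apply: contraNneq uR => ->.
  rewrite /badj ux /=.
  move: (touchS (subsetUl v w) (subxx x)) (touchS (subsetUr v w) (subxx x)).
  by case: (touch v x); case: (touch w x); case: (touch _ x); case: (v != x);
     case: (w != x) => //; by [move=> /(_ isT) | move=> _ /(_ isT)].
have -> : codeg B v w = \sum_(x in rest) badj v x * badj w x.
  by rewrite /codeg eB !big_setU1 //= !badjxx !muln0 !mul0n.
rewrite /contract -/rest {1}eB !deg_sumU1 //.
have -> : deg (w |: rest) v = badj v w + deg rest v by rewrite /deg big_setU1.
have : \sum_(x in rest) (badj v x + badj w x) <=
       \sum_(x in rest) (badj (v :|: w) x + badj v x * badj w x) by apply: leq_sum.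
rewrite vw !big_split /=.
rewrite -/(deg rest v) -/(deg rest w) -/(deg rest (v :|: w)); lia.
Qed.

End Contraction.

Lemma deg_nbhd B v w : deg [set x in B | badj v x] w = codeg B v w.
Proof.
rewrite /deg /codeg big_mkcond [RHS]big_mkcond /=; apply: eq_bigr => x _.
by rewrite inE; case: (x \in B); case: (badj v x); rewrite /= ?mul1n ?mul0n.
Qed.

Lemma clique_model_nbhd B v h Q :
  branch_sets B -> v \in B -> clique_model [set x in B | badj v x] h Q ->
  clique_model B h.+1 (fun i => if i is k.+1 then Q k else v).
Proof.
move=> mB vB [QN QQ]; set N := [set x in B | badj v x].
have NB : N \subset B by apply/subsetP => x; rewrite inE => /andP [].
have coverNB : cover N \subset cover B by apply/bigcupsP => b /(subsetP NB); apply: bigcup_sup.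
have vQ k : k < h -> [disjoint v & Q k] /\ touch v (Q k).
  move=> kh; have [_ QcN [b bN bQ]] := QN k kh; move: bN; rewrite inE => /andP [bB /andP [vb tvb]].
  split; last exact: touchS (subxx v) bQ tvb.
  apply: disjointWr QcN _; apply/bigcup_disjointP => b' /[!inE] /andP [b'B /andP [vb' _]].
  exact: mB.2.
split=> [[|k] kh|[|k] [|l] //= kh lh nkl].
- by have [_ cv] := mB.1 v vB; split=> //; [apply: bigcup_sup | exists v].
- have [cQ QcN [b bN bQ]] := QN k kh; split=> //; first exact: subset_trans coverNB.
  by exists b => //; apply: (subsetP NB).
- exact: vQ.
- by have [d t] := vQ k kh; rewrite disjoint_sym touchC.
- exact: QQ.
Qed.

End BranchSets.

Section Mader.
Variable G : sgraph.
Implicit Types (B : {set {set vt G}}) (v : {set vt G}).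

Lemma deg_card B v : deg B v = #|[set x in B | badj v x]|.
Proof.
rewrite /deg -sum1_card big_mkcond [RHS]big_mkcond /=; apply: eq_bigr => x _.
by rewrite inE; case: (x \in B); case: (badj v x).
Qed.

Lemma clique_modelS B B' h Q :
  B' \subset B -> clique_model B' h Q -> clique_model B h Q.
Proof.
move=> /subsetP sB; apply: clique_model_refine; last by move=> b /sB; exists b.
by apply/bigcupsP => b /sB; apply: bigcup_sup.
Qed.

(* Delete a vertex of small degree, or contract an edge with few common
   neighbours; if neither is possible, the neighbourhood of any vertex is dense
   enough to contain a K_h model, which together with that vertex gives K_(h+1). *)
Theorem clique_model_of_dense h B :
  branch_sets B -> B != set0 -> 2 ^ h * #|B| <= deg_sum B -> exists Q, clique_model B h Q.
Proof.
elim: h B => [|h IHh] B; first by exists (fun _ => set0).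
move: {2}#|B| (leqnn #|B|) => n; elim: n B => [|n IHn] B leB mB nB.
  by move: leB; rewrite leqn0 cards_eq0 (negbTE nB).
have c_gt0 : 0 < 2 ^ h by rewrite expn_gt0.
rewrite expnS; set c := 2 ^ h => dense.
have [/exists_inP [v vB low]|high] := boolP [exists v in B, deg B v <= c].
  have cardB := cardsD1 v B; rewrite vB /= in cardB.
  have nB' : B :\ v != set0.
    apply: contraTneq dense => B'0; rewrite -ltnNge (deg_sumD1 vB) (deg_setD1 vB).
    by rewrite B'0 /deg_sum /deg !big_set0 cardB B'0 cards0; lia.
  have [Q QB'] : exists Q, clique_model (B :\ v) h.+1 Q.
    apply: IHn (branch_setsS (subD1set B v) mB) nB' _; first by move: leB; rewrite cardB.
    rewrite expnS -/c; move: dense low; rewrite (deg_sumD1 vB) cardB.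
    by move: (deg_sum _) (deg _ _) #|_| => D d k; nia.
  by exists Q; apply: clique_modelS QB'; apply: subD1set.
have [/exists_inP [v vB /exists_inP [w wB /andP [vw few]]]|many] :=
  boolP [exists v in B, exists w in B, badj v w && (codeg B v w < c)].
  have cardB' := card_contract mB vB wB vw.
  have [Q QB'] : exists Q, clique_model (contract B v w) h.+1 Q.
    apply: IHn (branch_sets_contract mB vB wB vw) _ _.
    - by move: leB; rewrite -cardB'.
    - by apply/set0Pn; exists (v :|: w); rewrite setU11.
    - rewrite expnS -/c; move: dense few (deg_sum_contract mB vB wB vw).
      rewrite -cardB'; move: (deg_sum B) (deg_sum _) (codeg _ _ _) #|_| => D D' m k.
      nia.
  by exists Q; apply: clique_model_contract QB'.
have [v vB] := set0Pn _ nB; set N := [set x in B | badj v x].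
have cN : c < #|N|.
  by rewrite -deg_card ltnNge; apply: contra high => low; apply/exists_inP; exists v.
have [Q QN] : exists Q, clique_model N h Q.
  apply: IHh (branch_setsS _ mB) _ _.
  - by apply/subsetP => x; rewrite inE => /andP [].
  - by rewrite -card_gt0; apply: leq_ltn_trans cN.
  - rewrite /deg_sum mulnC -sum_nat_const; apply: leq_sum => w; rewrite inE => /andP [wB vw].
    rewrite deg_nbhd leqNgt; apply: contra many => few; apply/exists_inP; exists v => //.
    by apply/exists_inP; exists w; rewrite // vw few.
by exists (fun i => if i is k.+1 then Q k else v); apply: clique_model_nbhd.
Qed.

Lemma clique_model_minor (H : sgraph) B Q :
  branch_sets B -> clique_model B #|vt H| Q -> minor H G.
Proof.
move=> mB [QB QQ]; exists (fun x => Q (enum_rank x)).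
have neq_rank (x y : vt H) : x != y -> (enum_rank x : nat) != enum_rank y.
  by apply: contraNneq => /val_inj /enum_rank_inj ->.
split.
- move=> x; have [_ _ [b bB bQ]] := QB _ (ltn_ord (enum_rank x)).
  have [/set0Pn [z zb] _] := mB.1 b bB.
  by apply/set0Pn; exists z; apply: (subsetP bQ).
- by move=> x; have [] := QB _ (ltn_ord (enum_rank x)).
- by move=> x y /neq_rank nxy; have [] := QQ _ _ (ltn_ord _) (ltn_ord _) nxy.
- move=> x y xy; have nxy : x != y by apply: contraTneq xy => ->; rewrite adj_irrefl.
  have [_ /exists_inP [u uQ /exists_inP [v vQ uv]]] :=
    QQ _ _ (ltn_ord (enum_rank x)) (ltn_ord (enum_rank y)) (neq_rank _ _ nxy).
  by exists u, v.
Qed.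

Lemma sparse_minors_of_minor_free (H : sgraph) :
  ~ minor H G -> sparse_minors G (2 ^ #|vt H|).
Proof.
move=> HG B mB nB; rewrite ltnNge; apply/negP.
by move=> /(clique_model_of_dense mB nB) [Q /(clique_model_minor mB)].
Qed.

End Mader.

Section DegenerateCliques.
Variables (V : finType) (F : rel V).

Definition rclique (K : {set V}) : bool :=
  [forall x in K, forall y in K, (x != y) ==> F x y].

Lemma cliques_set0 : [set K : {set V} | (K \subset set0) && rclique K] = [set set0].
Proof.
apply/setP => K; rewrite !inE subset0; case: eqP => // ->.
by apply/forall_inP => x; rewrite inE.
Qed.

(* A clique containing the low-degree vertex a is a plus a subset of its
   out-neighbours; every other clique lies in S :\ a. *)
Lemma card_cliques_degenerate (c : nat) (S : {set V}) :
  (forall S' : {set V}, S' \subset S -> S' != set0 ->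
     exists2 a, a \in S' & #|[set b in S' | F a b]| < c) ->
  #|[set K : {set V} | (K \subset S) && rclique K]| <= 2 ^ c * #|S| + 1.
Proof.
move: {2}#|S| (leqnn #|S|) => n; elim: n S => [|n IHn] S leS degS.
  by move: leS; rewrite leqn0 cards_eq0 => /eqP ->; rewrite cliques_set0 cards1 leq_addl.
have [->|nS] := eqVneq S set0; first by rewrite cliques_set0 cards1 leq_addl.
have [a aS lowa] := degS S (subxx S) nS; set Na := [set b in S | F a b].
have cardS := cardsD1 a S; rewrite aS /= in cardS.
have IH : #|[set K : {set V} | (K \subset S :\ a) && rclique K]| <= 2 ^ c * #|S :\ a| + 1.
  apply: IHn => [|S' sS']; first by move: leS; rewrite cardS.
  by apply: degS; apply: subset_trans sS' (subD1set S a).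
have cliquesS : [set K : {set V} | (K \subset S) && rclique K] \subset
    [set K : {set V} | (K \subset S :\ a) && rclique K] :|: [set a |: K | K in powerset Na].
  apply/subsetP => K; rewrite inE => /andP [KS cK]; rewrite inE.
  have [aK|aK] := boolP (a \in K); last first.
    apply/orP; left; rewrite inE cK andbT; apply/subsetP => x xK.
    by rewrite !inE (subsetP KS) // andbT; apply: contraNneq aK => <-.
  apply/orP; right; apply/imsetP; exists (K :\ a); last by rewrite setD1K.
  rewrite inE; apply/subsetP => y; rewrite !inE => /andP [ya yK].
  rewrite (subsetP KS) //=; apply: (implyP (forall_inP (forall_inP cK a aK) y yK)).
  by rewrite eq_sym.
have cardNa : #|[set a |: K | K in powerset Na]| <= 2 ^ c.
  by apply: leq_trans (leq_imset_card _ _) _; rewrite card_powerset leq_exp2l // ltnW.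
apply: leq_trans (subset_leq_card cliquesS) _; apply: leq_trans (leq_card_setU _ _).1 _.
by move: IH cardNa; rewrite cardS mulnDr muln1; lia.
Qed.

End DegenerateCliques.

Section Pairings.
Variable G : sgraph.
Implicit Types (X S : {set vt G}) (Y : {set {set vt G}}) (a b : vt G).

Definition pairing := {ffun {set vt G} -> option (vt G * vt G)}.

(* p D = Some (a, b) marks two distinct neighbours of D; no unordered pair is
   used twice *)
Definition pairing_valid Y (p : pairing) : Prop :=
  (forall D a b, p D = Some (a, b) -> [/\ D \in Y, a != b, a \in nbhd D & b \in nbhd D]) /\
  (forall D D' a b, p D = Some (a, b) -> (p D' = Some (a, b) \/ p D' = Some (b, a)) -> D = D').

Definition paired (p : pairing) : rel (vt G) :=
  fun a b => [exists D, (p D == Some (a, b)) || (p D == Some (b, a))].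

Definition matched (p : pairing) : {set {set vt G}} := [set D | p D != None].

Definition pairing_maximal Y (p : pairing) : bool :=
  [forall D in Y, (p D == None) ==> rclique (paired p) (nbhd D)].

Lemma matched_sub Y p : pairing_valid Y p -> matched p \subset Y.
Proof.
move=> [vp _]; apply/subsetP => D; rewrite inE.
by case pD: (p D) => [[a b]|] // _; have [] := vp _ _ _ pD.
Qed.

Lemma pairing_extend Y p : pairing_valid Y p -> ~~ pairing_maximal Y p ->
  exists p', pairing_valid Y p' /\ #|matched p'| = #|matched p|.+1.
Proof.
move=> [vp injp] /forall_inPn [D DY]; rewrite negb_imply => /andP [/eqP pD].
move=> /forall_inPn [a aN] /forall_inPn [b bN]; rewrite negb_imply => /andP [ab nab].
have fresh E : p E = Some (a, b) \/ p E = Some (b, a) -> False.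
  by move=> pE; move/negP: nab; apply; apply/existsP; exists E; case: pE => ->; rewrite eqxx ?orbT.
pose p' : pairing := [ffun E => if E == D then Some (a, b) else p E].
exists p'; split; first split.
- move=> E x y; rewrite ffunE; case: (eqVneq E D) => [->|_ /vp //].
  by case=> <- <-.
- move=> E E' x y; rewrite !ffunE.
  case: (eqVneq E D) => [->|ED]; case: (eqVneq E' D) => [->|E'D] //.
  + by case=> <- <- /fresh.
  + by move=> pE [] [ex ey]; subst; case: (fresh E); [left|right].
  + exact: injp.
- have -> : matched p' = D |: matched p.
    by apply/setP => E; rewrite !inE ffunE; case: (eqVneq E D).
  by rewrite cardsU1 inE pD eqxx.
Qed.

Lemma exists_maximal_pairing Y : exists p, pairing_valid Y p /\ pairing_maximal Y p.
Proof.
suff ind k p : pairing_valid Y p -> #|Y| - #|matched p| <= k ->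
    exists q, pairing_valid Y q /\ pairing_maximal Y q.
  apply: (ind #|Y| [ffun => None]); last exact: leq_subr.
  by split=> [D a b|D D' a b]; rewrite ffunE.
elim: k p => [|k IHk] p vp le_k.
all: have [maxp|/(pairing_extend vp) [p' [vp' card_p']]] := boolP (pairing_maximal Y p);
  first by exists p.
all: have := subset_leq_card (matched_sub vp'); rewrite card_p' => le_p'.
- by lia.
- by apply: IHk vp' _; lia.
Qed.

Section Bags.
Variables (X : {set vt G}) (Y : {set {set vt G}}) (p : pairing).
Hypotheses (YX : Y \subset cc X) (vp : pairing_valid Y p).

Lemma pairing_Some D a b : p D = Some (a, b) ->
  [/\ D \in cc X, a \in X, b \in X, a != b & [/\ a \in nbhd D, b \in nbhd D & D \subset ~: X]].
Proof.
move=> pD; have [DY ab aN bN] := vp.1 _ _ _ pD; have DX := subsetP YX _ DY.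
by split; rewrite ?(subsetP (nbhd_cc_sub DX)) ?(cc_sub_compl DX).
Qed.

Definition bag S a : {set vt G} :=
  a |: \bigcup_(D | [exists b in S, p D == Some (a, b)]) D.

Definition bags S : {set {set vt G}} := [set bag S a | a in S].

Lemma bag_id S a : a \in bag S a.
Proof. exact: setU11. Qed.

Lemma bagP S a x :
  x \in bag S a -> x = a \/ exists D b, [/\ b \in S, p D = Some (a, b) & x \in D].
Proof.
case/setU1P=> [->|/bigcupP [D /exists_inP [b bS /eqP pD] xD]]; first by left.
by right; exists D, b.
Qed.

Lemma sub_bag S a b D : b \in S -> p D = Some (a, b) -> D \subset bag S a.
Proof.
move=> bS pD; apply/subsetP => x xD; apply/setU1P; right; apply/bigcupP; exists D => //.
by apply/exists_inP; exists b; rewrite // pD.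
Qed.

Section FixedS.
Variable S : {set vt G}.
Hypothesis SX : S \subset X.

Lemma bag_disjoint a a' : a \in S -> a' \in S -> a != a' -> [disjoint bag S a & bag S a'].
Proof.
have notX D x b c : p D = Some (b, c) -> x \in D -> x \in S -> False.
  move=> pD xD /(subsetP SX); have [_ _ _ _ [_ _ /subsetP DX]] := pairing_Some pD.
  by move: (DX x xD); rewrite inE => /negPf ->.
move=> aS a'S aa'; rewrite -setI_eq0; apply/eqP/setP => x; rewrite in_setI in_set0.
apply/negP => /andP [/bagP [xa|[D [b [_ pD xD]]]] /bagP [xa'|[D' [b' [_ pD' xD']]]]].
- by move: aa'; rewrite -xa xa' eqxx.
- by apply: notX pD' xD' _; rewrite xa.
- by apply: notX pD xD _; rewrite xa'.
have [[DX _ _ _ _] [D'X _ _ _ _]] := (pairing_Some pD, pairing_Some pD').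
have [eD|nD] := eqVneq D D'; last by rewrite (disjointFr (cc_disjoint DX D'X nD) xD) in xD'.
by move: pD'; rewrite -eD pD => -[ea _]; move: aa'; rewrite ea eqxx.
Qed.

Lemma bag_inj : {in S &, injective (bag S)}.
Proof.
move=> a a' aS a'S eq_bag; apply: contraTeq (bag_id S a') => aa'.
by rewrite -eq_bag (disjointFl (bag_disjoint aS a'S aa') (bag_id S a')).
Qed.

Lemma bag_connected a : connected_set (bag S a).
Proof.
apply: (@connected_set_star _ _ a) => u /bagP [->|[D [b [bS pD uD]]]]; first exact: connect0.
have [DX _ _ _ [aN _ _]] := pairing_Some pD; have /subsetP sD := sub_bag bS pD.
move: aN; rewrite inE => /andP [_ /exists_inP [z zD za]].
apply: (@connect_trans _ _ z); first by apply: connect1; rewrite /adj_in bag_id sD // adj_sym.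
exact: connect_adj_inS (sub_bag bS pD) (connected_set_connect (cc_connected DX) zD uD).
Qed.

Lemma branch_sets_bags : branch_sets (bags S).
Proof.
split=> [b /imsetP [a aS ->]|b1 b2 /imsetP [a1 a1S ->] /imsetP [a2 a2S ->] nb].
  by split; [apply/set0Pn; exists a; apply: bag_id | apply: bag_connected].
by apply: bag_disjoint => //; apply: contraNneq nb => ->.
Qed.

Lemma paired_badj a b : a \in S -> b \in S -> paired p a b -> badj (bag S a) (bag S b).
Proof.
have touch_bag x y D : x \in S -> y \in S -> p D = Some (x, y) -> touch (bag S x) (bag S y).
  move=> xS yS pD; have [_ _ _ _ [_ yN _]] := pairing_Some pD.
  move: yN; rewrite inE => /andP [_ /exists_inP [z zD zy]].
  apply/exists_inP; exists z; first exact: subsetP (sub_bag yS pD) _ zD.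
  by apply/exists_inP; exists y; rewrite ?bag_id.
move=> aS bS /existsP [D /orP [] /eqP pD].
- have [_ _ _ ab _] := pairing_Some pD.
  by rewrite /badj (inj_in_eq bag_inj) // ab (touch_bag _ _ _ aS bS pD).
- have [_ _ _ ba _] := pairing_Some pD.
  by rewrite /badj (inj_in_eq bag_inj) // eq_sym ba touchC (touch_bag _ _ _ bS aS pD).
Qed.

Lemma card_paired_le_deg a :
  a \in S -> #|[set b in S | paired p a b]| <= deg (bags S) (bag S a).
Proof.
move=> aS; rewrite /deg /bags big_imset /=; last exact: bag_inj.
rewrite -sum1_card big_mkcond [X in _ <= X]big_mkcond /=; apply: leq_sum => b _.
by rewrite inE; case: (b \in S) (paired p a b) (@paired_badj a b aS) => [] [] //= ->.
Qed.

Lemma deg_sum_bags : deg_sum (bags S) = \sum_(a in S) deg (bags S) (bag S a).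
Proof. by rewrite /deg_sum {1}/bags big_imset //=; apply: bag_inj. Qed.

Lemma card_bags : #|bags S| = #|S|.
Proof. exact: card_in_imset bag_inj. Qed.

End FixedS.

Lemma bags_neq0 S : S != set0 -> bags S != set0.
Proof. by rewrite /bags imset_eq0. Qed.

Lemma card_matched_le_sum_paired :
  #|matched p| <= \sum_(a in X) #|[set b in X | paired p a b]|.
Proof.
set P := [set ab : vt G * vt G | [&& ab.1 \in X, ab.2 \in X & paired p ab.1 ab.2]].
have -> : \sum_(a in X) #|[set b in X | paired p a b]| = #|P|.
  transitivity (\sum_(a in X) \sum_(b in X | paired p a b) 1).
    by apply: eq_bigr => a _; rewrite -sum1_card; apply: eq_bigl => b; rewrite inE.
  by rewrite pair_big_dep -sum1_card; apply: eq_bigl => -[a b]; rewrite inE.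
rewrite -(card_in_imset (f := p)); last first.
  move=> D D' + _; rewrite inE; case pD: (p D) => [[a b]|] // _ pD'.
  by apply: vp.2 pD _; left; rewrite -pD'.
apply: (leq_trans _ (leq_imset_card Some P)).
apply/subset_leq_card/subsetP => _ /imsetP [D + ->].
rewrite inE; case pD: (p D) => [[a b]|] // _.
have [_ aX bX _ _] := pairing_Some pD.
by apply: imset_f; rewrite inE aX bX; apply/existsP; exists D; rewrite pD eqxx.
Qed.

Section Sparse.
Variable c : nat.
Hypothesis sparse : sparse_minors G c.

Lemma paired_degenerate S :
  S \subset X -> S != set0 -> exists2 a, a \in S & #|[set b in S | paired p a b]| < c.
Proof.
move=> SX nS; have [/exists_inP [a aS low]|/exists_inPn high] :=
  boolP [exists a in S, deg (bags S) (bag S a) < c].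
  by exists a => //; apply: leq_ltn_trans (card_paired_le_deg SX aS) low.
have := sparse (branch_sets_bags SX) (bags_neq0 nS).
rewrite card_bags // deg_sum_bags // ltnNge mulnC -sum_nat_const => /negP [].
by apply: leq_sum => a /high; rewrite -leqNgt.
Qed.

Lemma card_matched : X != set0 -> #|matched p| < c * #|X|.
Proof.
move=> nX; apply: leq_ltn_trans card_matched_le_sum_paired _.
have := sparse (branch_sets_bags (subxx X)) (bags_neq0 nX).
rewrite card_bags // deg_sum_bags //; apply: leq_ltn_trans; apply: leq_sum => a.
exact: card_paired_le_deg.
Qed.

End Sparse.
End Bags.

Lemma card_comps_distinct_nbhds (c : nat) X Y :
  sparse_minors G c -> X != set0 -> Y \subset cc X -> {in Y &, injective (@nbhd G)} ->
  #|Y| <= (c + 2 ^ c + 1) * #|X|.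
Proof.
move=> sparse nX YX injY; have [p [vp maxp]] := exists_maximal_pairing Y.
have card_m := card_matched YX vp sparse nX.
have card_u : #|Y :\: matched p| <= 2 ^ c * #|X| + 1.
  rewrite -(card_in_imset (f := @nbhd G)); last first.
    by move=> D D' /setDP [DY _] /setDP [D'Y _]; apply: injY.
  apply: leq_trans (card_cliques_degenerate (paired_degenerate YX vp sparse)).
  apply/subset_leq_card/subsetP => _ /imsetP [D /setDP [DY DnM] ->].
  rewrite inE (nbhd_cc_sub (subsetP YX _ DY)) /=.
  by move: DnM; rewrite inE negbK; apply/implyP/(forall_inP maxp).
rewrite -(cardsID (matched p) Y) (setIidPr (matched_sub vp)).
by move: card_m card_u; rewrite !mulnDl; lia.
Qed.

End Pairings.

Lemma exists_nbhd_transversal (G : sgraph) (X : {set vt G}) :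
  exists Y : {set {set vt G}},
    [/\ Y \subset cc X, {in Y &, injective (@nbhd G)} & #|Y| = #|nbhds_of_comps X|].
Proof.
pose rep N := odflt set0 [pick D in cc X | nbhd D == N].
have repP N : N \in nbhds_of_comps X -> rep N \in cc X /\ nbhd (rep N) = N.
  case/imsetP => C CX ->; rewrite /rep; case: pickP => [D /andP [DX /eqP]|/(_ C)] //.
  by rewrite CX eqxx.
exists [set rep N | N in nbhds_of_comps X]; split.
- by apply/subsetP => _ /imsetP [N /repP [? _] ->].
- by move=> _ _ /imsetP [N /repP [_ eN] ->] /imsetP [N' /repP [_ eN'] ->]; rewrite eN eN' => ->.
- apply: card_in_imset => N N' /repP [_ eN] /repP [_ eN'] e.
  by rewrite -eN -eN' e.
Qed.

Theorem corollary2p3 (C : sgraph -> Prop) :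
  apex_minor_free C ->
  exists nu : nat, 0 < nu /\
    forall G : sgraph, C G ->
    forall X : {set vt G}, X != set0 ->
      #|nbhds_of_comps X| <= nu * #|X|.
Proof.
move=> [_ [H [_ Hfree]]]; set c := 2 ^ #|vt H|.
exists (c + 2 ^ c + 1); split; first by rewrite addn1.
move=> G CG X nX; have [Y [YX injY <-]] := exists_nbhd_transversal X.
apply: card_comps_distinct_nbhds nX YX injY.
exact: sparse_minors_of_minor_free (Hfree G CG).
Qed.
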